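(* In the binary setting ($D,Z\in\{0,1\}$, fixed $X=x$ and $\tau$), let $\Pi$, $q$, $\partial\Pi$ be as follows: $\Pi(y)=(P[Y\le y_D\mid Z=0]-\tau,\,P[Y\le y_D\mid Z=1]-\tau)'$ with $y_D=(1-D)y_0+Dy_1$, $\Pi(q)=0$, the conditional densities $f_Y(y\mid D=d,Z=z)$ exist, and $\partial\Pi(y)$, with rows indexed by $z=0,1$ and columns by $d=0,1$ and entries $f_{Y,D}(y_d,d\mid Z=z):=f_Y(y_d\mid D=d,Z=z)P[D=d\mid Z=z]$, is a $C^1$ Jacobian of $\Pi$ on $\mathcal L$. Let $K>0$, $C=\{y\in\mathbb R^2:\|y\|_\infty\le K\}$, $H=\{(y_0,y_1)\in\mathbb R^2: y_1\ge y_0\}$, and let $\mathcal L$ be either $q+C$ or $(q+C)\cap H$. Suppose that for all $y=(y_0,y_1)\in\mathcal L$, $$\frac{f_{Y,D}(y_1,1\mid Z=1)}{f_{Y,D}(y_0,0\mid Z=1)}>\frac{f_{Y,D}(y_1,1\mid Z=0)}{f_{Y,D}(y_0,0\mid Z=0)}\quad\text{(LMR)}$$ (understood as $f_{Y,D}(y_1,1\mid Z=1)f_{Y,D}(y_0,0\mid Z=0)>f_{Y,D}(y_1,1\mid Z=0)f_{Y,D}(y_0,0\mid Z=1)$), and $$f_{Y,D}(y_1,1\mid Z=1)>0,\qquad f_{Y,D}(y_0,0\mid Z=0)>0.\quad\text{(POS)}$$ Then, taking the trivial covering $\mathcal L_1=\mathcal L$ and no row rearrangement, for every $y\in\mathcal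 L$ and every subspace $L$ spanned by a face of $\mathcal L$ containing $y$, the map $\mathrm{proj}_L\circ\partial\Pi(y):L\to L$ has positive determinant; consequently $y=q$ is the unique solution of $\Pi(y)=0$ in $\mathcal L$. Analogously, the same conclusion (after swapping the two rows of $\partial\Pi$) holds if instead, for all $y\in\mathcal L$, the reverse inequality in (LMR) holds together with $f_{Y,D}(y_1,1\mid Z=0)>0$ and $f_{Y,D}(y_0,0\mid Z=1)>0$.
   Context: A face of a polytope $\mathcal L$ is the intersection of $\mathcal L$ with a supporting hyperplane (including $\mathcal L$ itself); the subspace spanned by a nonempty face is the translation to the origin of the minimal affine subspace containing it; $\mathrm{proj}_L$ is orthogonal projection onto $L$, and determinants of maps $L\to L$ are computed in coordinates of $L$. Zero-dimensional faces (vertices) impose no condition. *)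

From Stdlib Require Import Reals Lra List.
Open Scope R_scope.

Definition pt := (R * R)%type.
Definition dot (u v : pt) : R := fst u * fst v + snd u * snd v.
Definition mat2 := (pt * pt)%type.
Definition mv (A : mat2) (v : pt) : pt := (dot (fst A) v, dot (snd A) v).
Definition det2 (A : mat2) : R :=
  fst (fst A) * snd (snd A) - snd (fst A) * fst (snd A).
Definition swap_rows (A : mat2) : mat2 := (snd A, fst A).

(** Index convention: false = 0, true = 1 (for d and for z). *)

Definition box (q : pt) (K : R) (y : pt) : Prop :=
  Rabs (fst y - fst q) <= K /\ Rabs (snd y - snd q) <= K.
Definition Hhalf (y : pt) : Prop := fst y <= snd y.
Definition Lset (withH : bool) (q : pt) (K : R) (y : pt) : Prop :=
  box q K y /\ (if withH then Hhalf y else True).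

Definition is_face (S F : pt -> Prop) : Prop :=
  (forall x, F x <-> S x) \/
  exists (a : pt) (b : R), a <> (0, 0) /\
    (forall x, S x -> dot a x <= b) /\
    (forall x, F x <-> (S x /\ dot a x = b)).

(** Linear subspace spanned by a face: the linear span of the differences
    u - w of points u, w of the face (translation to the origin of the
    affine hull). *)
Definition lin_comb (l : list (R * pt * pt)) : pt :=
  fold_right (fun t acc =>
     let '(c, u, w) := t in
     (fst acc + c * (fst u - fst w), snd acc + c * (snd u - snd w))) (0, 0) l.
Definition span_face (F : pt -> Prop) (v : pt) : Prop :=
  exists l : list (R * pt * pt),
    (forall c u w, In (c, u, w) l -> F u /\ F w) /\ v = lin_comb l.

(** Determinant of proj_L o A : L -> L, computed in coordinates of L.
    For L a line spanned by v <> 0, in the coordinate of the basis v the map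
    is multiplication by  <v, A v> / <v, v>. *)
Definition det_proj_line (v : pt) (A : mat2) : R := dot v (mv A v) / dot v v.

(** "det(proj_L o A |_L) > 0" for a linear subspace L of R^2.
    Subspaces of R^2 are R^2, lines R v (v <> 0), or {0}; the latter
    (vertices) imposes no condition. *)
Definition proj_det_pos (L : pt -> Prop) (A : mat2) : Prop :=
  ((forall x, L x) -> det2 A > 0) /\
  (forall v : pt, v <> (0, 0) -> (forall x, L x <-> exists c, x = (c * fst v, c * snd v)) ->
      det_proj_line v A > 0).

(** The model.  p d z = P[D=d | Z=z];
    Fc d z t = P[Y <= t | D=d, Z=z];  f d z = its density f_Y(. | D=d, Z=z). *)

(** Pi(y)_z = P[Y <= y_D | Z=z] - tau
          = sum_d P[Y <= y_d | D=d, Z=z] P[D=d | Z=z] - tau *)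
Definition PiZ (Fc : bool -> bool -> R -> R) (p : bool -> bool -> R) (tau : R)
    (z : bool) (y : pt) : R :=
  Fc false z (fst y) * p false z + Fc true z (snd y) * p true z - tau.
Definition Pi Fc p tau (y : pt) : pt := (PiZ Fc p tau false y, PiZ Fc p tau true y).

Definition fyd (f : bool -> bool -> R -> R) (p : bool -> bool -> R) d z t : R :=
  f d z t * p d z.
Definition dPi f p (y : pt) : mat2 :=
  ((fyd f p false false (fst y), fyd f p true false (snd y)),
   (fyd f p false true (fst y), fyd f p true true (snd y))).

Definition conclusion (Lp : pt -> Prop) (J : pt -> mat2) (Pif : pt -> pt) (q : pt) : Prop :=
  (forall y F, Lp y -> is_face Lp F -> F y -> proj_det_pos (span_face F) (J y)) /\
  (forall y, Lp y -> Pif y = (0, 0) -> y = q).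

(** In the binary model, [Pi z y = G(0,z)(y0) + G(1,z)(y1) - tau] where
   [G(d,z) = P[Y <= . | D=d, Z=z] P[D=d | Z=z]] is nondecreasing with
   derivative [g(d,z) = f_{Y,D}(., d | Z=z)].

   - Uniqueness.  If [Pi y = Pi q] with [y0 < q0], then [G(0,0)] is strictly
     increasing (POS), so row [z=0] forces [y1 > q1]; applying Cauchy's mean
     value theorem to both rows on the two coordinate intervals yields a point
     [(xi, eta)] of [L] at which the likelihood-ratio inequality (LMR) becomes
     an equality, a contradiction.  Hence [y0 = q0], and then row [z=1] and
     strict monotonicity of [G(1,1)] give [y1 = q1].
   - Determinants.  Every edge of the box, or of the box cut by [y0 <= y1], has
     a direction [v] with [v0 v1 >= 0]; for a matrix with positive diagonal and
     nonnegative off-diagonal entries the quadratic form [v . A v] is then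
     positive, and the full-dimensional face needs [det A > 0], which is (LMR). *)

From Stdlib Require Import Reals Lra List Classical.
Open Scope R_scope.

Lemma Lset_iff w q K a b : Lset w q K (a, b) <->
  (fst q - K <= a <= fst q + K /\ snd q - K <= b <= snd q + K /\ (w = true -> a <= b)).
Proof.
  unfold Lset, box, Hhalf; simpl.
  split.
  - intros [[Ha Hb] Hw]; split; [|split].
    + revert Ha; unfold Rabs; destruct (Rcase_abs _); lra.
    + revert Hb; unfold Rabs; destruct (Rcase_abs _); lra.
    + now intros ->.
  - intros [Ha [Hb Hw]]; split; [split|].
    + unfold Rabs; destruct (Rcase_abs _); lra.
    + unfold Rabs; destruct (Rcase_abs _); lra.
    + destruct w; auto.
Qed.

Lemma cauchy_mvt (U V u v : R -> R) a b :
  (forall x, derivable_pt_lim U x (u x)) -> (forall x, derivable_pt_lim V x (v x)) ->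
  a < b -> exists c, a < c < b /\ (V b - V a) * u c = (U b - U a) * v c.
Proof.
  intros HU HV Hab.
  assert (dU : forall c, derivable_pt U c) by (intro c; exists (u c); apply HU).
  assert (dV : forall c, derivable_pt V c) by (intro c; exists (v c); apply HV).
  destruct (MVT U V a b (fun c _ => dU c) (fun c _ => dV c) Hab
     (fun c _ => derivable_continuous_pt _ _ (dU c))
     (fun c _ => derivable_continuous_pt _ _ (dV c))) as [c [Hc E]].
  exists c; split; [exact Hc|].
  now rewrite (derive_pt_eq_0 _ _ _ _ (HU c)), (derive_pt_eq_0 _ _ _ _ (HV c)) in E.
Qed.

Lemma pos_deriv_strict_incr (U u : R -> R) a b :
  (forall x, derivable_pt_lim U x (u x)) -> a < b -> (forall c, a < c < b -> u c > 0) ->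
  U a < U b.
Proof.
  intros HU Hab Hpos.
  destruct (cauchy_mvt U id u (fun _ => 1) a b HU derivable_pt_lim_id Hab) as [c [Hc E]].
  unfold id in E; specialize (Hpos c Hc); nra.
Qed.

Lemma monotone_deriv_nonneg (U : R -> R) x l :
  (forall s t, s <= t -> U s <= U t) -> derivable_pt_lim U x l -> 0 <= l.
Proof.
  intros Hmono Hd; destruct (Rle_or_lt 0 l) as [H|H]; [exact H|exfalso].
  destruct (Hd (-l/2) ltac:(lra)) as [del Hdel].
  pose proof (cond_pos del) as Hdel_pos.
  assert (Hsmall : Rabs (del/2) < del) by (rewrite Rabs_right; lra).
  specialize (Hdel (del/2) ltac:(lra) Hsmall).
  assert (Hquot : 0 <= (U (x + del/2) - U x) / (del/2)).
  { apply Rmult_le_pos; [pose proof (Hmono x (x + del/2)); lra|].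
    left; apply Rinv_0_lt_compat; lra. }
  revert Hdel; unfold Rabs; destruct (Rcase_abs _); lra.
Qed.

Lemma derivable_pt_lim_scal_r (U : R -> R) c x l :
  derivable_pt_lim U x l -> derivable_pt_lim (fun t => U t * c) x (l * c).
Proof.
  intro H.
  pose proof (derivable_pt_lim_mult U (fct_cte c) x l 0 H (derivable_pt_lim_const c x)) as Hm.
  unfold mult_fct, fct_cte in Hm.
  now replace (l * c) with (l * c + U x * 0) by ring.
Qed.

Section Injectivity.

Variables (w : bool) (q : pt) (K : R).
Variables (G g : bool -> bool -> R -> R).
Hypothesis G_deriv : forall d z t, derivable_pt_lim (G d z) t (g d z t).
Hypothesis G_mono : forall d z s t, s <= t -> G d z s <= G d z t.
Hypothesis LMR : forall y, Lset w q K y ->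
  g true true (snd y) * g false false (fst y) > g true false (snd y) * g false true (fst y).
Hypothesis POS : forall y, Lset w q K y -> g true true (snd y) > 0 /\ g false false (fst y) > 0.

(** [Pi + tau], row by row. *)
Definition Phi (z : bool) (y : pt) : R := G false z (fst y) + G true z (snd y).

Let inL := Lset w q K.

Lemma first_strict u v : inL u -> inL v -> fst u < fst v ->
  G false false (fst u) < G false false (fst v).
Proof.
  intros Hu Hv Hlt; apply (pos_deriv_strict_incr _ (g false false)); auto.
  intros c Hc; apply (POS (c, snd q + K)).
  destruct u as [u0 u1], v as [v0 v1]; apply Lset_iff in Hu, Hv; apply Lset_iff; simpl in *.
  intuition lra.
Qed.

Lemma second_strict u v : inL u -> inL v -> snd u < snd v ->
  G true true (snd u) < G true true (snd v).
Proof.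
  intros Hu Hv Hlt; apply (pos_deriv_strict_incr _ (g true true)); auto.
  intros c Hc; apply (POS (fst q - K, c)).
  destruct u as [u0 u1], v as [v0 v1]; apply Lset_iff in Hu, Hv; apply Lset_iff; simpl in *.
  intuition lra.
Qed.

(** Two anti-ordered points of [L] cannot share both values of [Phi]: the two
    Cauchy mean value points would violate (LMR). *)
Lemma no_anti_ordered_pair u v : inL u -> inL v ->
  fst u < fst v -> snd v < snd u -> Phi false u = Phi false v -> Phi true u = Phi true v -> False.
Proof.
  destruct u as [u0 u1], v as [v0 v1]; unfold Phi; simpl.
  intros Hu Hv H0 H1 E0 E1.
  assert (Hgrowth : G false false u0 < G false false v0) by exact (first_strict _ _ Hu Hv H0).
  destruct (cauchy_mvt _ _ _ _ u0 v0 (G_deriv false false) (G_deriv false true) H0)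
    as [xi [Hxi Exi]].
  destruct (cauchy_mvt _ _ _ _ v1 u1 (G_deriv true false) (G_deriv true true) H1)
    as [eta [Heta Eeta]].
  assert (Hmid : inL (xi, eta)).
  { apply Lset_iff in Hu, Hv; apply Lset_iff; simpl in *; intuition lra. }
  pose proof (LMR _ Hmid) as Hlmr; simpl in Hlmr.
  set (P := G false false v0 - G false false u0) in *.
  set (Q := G false true v0 - G false true u0) in *.
  replace (G true false u1 - G true false v1) with P in Eeta by (unfold P; lra).
  replace (G true true u1 - G true true v1) with Q in Eeta by (unfold Q; lra).
  assert (Hzero : P * (g true true eta * g false false xi - g true false eta * g false true xi) = 0).
  { replace (P * (g true true eta * g false false xi - g true false eta * g false true xi))
      with ((P * g true true eta) * g false false xi - g true false eta * (P * g false true xi))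
      by ring.
    rewrite <- Eeta, <- Exi; ring. }
  apply Rmult_integral in Hzero; unfold P in Hzero; destruct Hzero; lra.
Qed.

(** Points of [L] with the same value of [Phi] have the same first coordinate:
    a smaller first coordinate forces a larger second one through row [z=0]. *)
Lemma Phi_first_coord u v : inL u -> inL v ->
  Phi false u = Phi false v -> Phi true u = Phi true v -> fst u = fst v.
Proof.
  assert (Hlt : forall a b, inL a -> inL b -> fst a < fst b ->
            Phi false a = Phi false b -> Phi true a = Phi true b -> False).
  { intros a b Ha Hb H0 E0 E1.
    pose proof (first_strict _ _ Ha Hb H0) as Hgrowth.
    destruct (Rlt_or_le (snd b) (snd a)) as [H1|H1].
    - exact (no_anti_ordered_pair a b Ha Hb H0 H1 E0 E1).
    - pose proof (G_mono true false _ _ H1); unfold Phi in E0; lra. }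
  intros Hu Hv E0 E1.
  destruct (Rtotal_order (fst u) (fst v)) as [H|[H|H]]; [|exact H|].
  - exfalso; exact (Hlt u v Hu Hv H E0 E1).
  - exfalso; exact (Hlt v u Hv Hu H (eq_sym E0) (eq_sym E1)).
Qed.

(** With equal first coordinates, row [z=1] and strictness of [G(1,1)] give
    equal second coordinates. *)
Lemma Phi_injective u v : inL u -> inL v ->
  Phi false u = Phi false v -> Phi true u = Phi true v -> u = v.
Proof.
  intros Hu Hv E0 E1.
  pose proof (Phi_first_coord u v Hu Hv E0 E1) as Hfst.
  assert (Hsnd_G : G true true (snd u) = G true true (snd v))
    by (unfold Phi in E1; rewrite Hfst in E1; lra).
  destruct u as [u0 u1], v as [v0 v1]; simpl in *; subst v0; f_equal.
  destruct (Rtotal_order u1 v1) as [H|[H|H]]; [|exact H|]; exfalso.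
  - pose proof (second_strict (u0, u1) (u0, v1) Hu Hv H); simpl in *; lra.
  - pose proof (second_strict (u0, v1) (u0, u1) Hv Hu H); simpl in *; lra.
Qed.

End Injectivity.

Lemma sumsq_pos (v : pt) : v <> (0, 0) -> fst v * fst v + snd v * snd v > 0.
Proof.
  destruct v as [v1 v2]; simpl; intro Hv.
  destruct (Req_dec v1 0) as [->|H1]; [destruct (Req_dec v2 0) as [->|H2]|].
  - contradiction.
  - nra.
  - nra.
Qed.

Lemma span_face_perp (F : pt -> Prop) a b v :
  (forall x, F x -> dot a x = b) -> span_face F v -> dot a v = 0.
Proof.
  intros HF [l [Hl ->]]; induction l as [|[[c u] u'] l IH]; simpl.
  - unfold dot; simpl; ring.
  - assert (Hrest : dot a (lin_comb l) = 0)
      by (apply IH; intros c0 u0 w0 Hin; apply (Hl c0 u0 w0); now right).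
    destruct (Hl c u u' (or_introl eq_refl)) as [Fu Fu'].
    pose proof (HF u Fu) as Eu; pose proof (HF u' Fu') as Eu'.
    revert Hrest Eu Eu'; unfold dot; destruct (lin_comb l), a, u, u'; simpl; intros Hr E E'.
    transitivity (0 + c * (b - b)); [rewrite <- Hr, <- E at 1; rewrite <- E'; ring|ring].
Qed.

Lemma span_face_distinct_points (F : pt -> Prop) v :
  span_face F v -> v <> (0, 0) -> exists u u', F u /\ F u' /\ u <> u'.
Proof.
  intros [l [Hl ->]] Hv; induction l as [|[[c u] u'] l IH]; simpl in *.
  - contradiction.
  - destruct (classic (u = u')) as [<-|Hne].
    + apply IH; [intros c0 u0 w0 Hin; apply (Hl c0 u0 w0); now right|].
      intro Hz; apply Hv; rewrite Hz; simpl; f_equal; ring.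
    + exists u, u'; destruct (Hl c u u' (or_introl eq_refl)); auto.
Qed.

(** A supporting line of [L] never contains two strictly anti-ordered points
    of [L]: its normal would have two nonzero entries of equal sign, and a
    corner-ward point of [L] would then lie beyond the line. *)
Lemma supporting_line_no_anti_pair w q K (a : pt) b (u v : pt) :
  Lset w q K u -> Lset w q K v -> a <> (0, 0) ->
  (forall x, Lset w q K x -> dot a x <= b) -> dot a u = b -> dot a v = b ->
  fst v < fst u -> snd u < snd v -> False.
Proof.
  destruct u as [u0 u1], v as [v0 v1], a as [a1 a2], q as [q0 q1]; unfold dot; simpl.
  intros Hu Hv Ha Hsupp Eu Ev H0 H1.
  apply Lset_iff in Hu, Hv; simpl in *.
  assert (Hpar : a1 * (u0 - v0) = a2 * (v1 - u1)) by lra.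
  destruct (Rtotal_order a2 0) as [Hneg|[Hz|Hpos]].
  - assert (Ha1 : a1 < 0) by (destruct (Rle_or_lt 0 a1); [nra|auto]).
    assert (Hcorner : Lset w (q0, q1) K (q0 - K, u1)) by (apply Lset_iff; simpl; intuition lra).
    specialize (Hsupp _ Hcorner); simpl in Hsupp; nra.
  - subst a2; assert (a1 = 0) by (rewrite Rmult_0_l in Hpar; apply Rmult_integral in Hpar; lra).
    subst; now apply Ha.
  - assert (Ha1 : a1 > 0) by (destruct (Rle_or_lt a1 0); [nra|auto]).
    assert (Hcorner : Lset w (q0, q1) K (u0, q1 + K)) by (apply Lset_iff; simpl; intuition lra).
    specialize (Hsupp _ Hcorner); simpl in Hsupp; nra.
Qed.

Lemma parallel_sign (a v d : pt) : a <> (0, 0) -> d <> (0, 0) ->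
  dot a v = 0 -> dot a d = 0 -> fst d * snd d >= 0 -> fst v * snd v >= 0.
Proof.
  intros Ha Hd Hv Hdd Hsign.
  pose proof (sumsq_pos a Ha) as Na; pose proof (sumsq_pos d Hd) as Nd.
  destruct a as [a1 a2], v as [v1 v2], d as [d1 d2]; unfold dot in *; simpl in *.
  assert (Hcross : v1 * d2 - v2 * d1 = 0).
  { assert (Hz : (a1 * a1 + a2 * a2) * (v1 * d2 - v2 * d1) = 0).
    { replace ((a1 * a1 + a2 * a2) * (v1 * d2 - v2 * d1)) with
        ((a1 * v1 + a2 * v2) * (a1 * d2 - a2 * d1) - (a1 * d1 + a2 * d2) * (a1 * v2 - a2 * v1))
        by ring.
      rewrite Hv, Hdd; ring. }
    apply Rmult_integral in Hz; lra. }
  assert (Hprod : v1 * v2 * (d1 * d1 + d2 * d2) = (v1 * v1 + v2 * v2) * (d1 * d2)).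
  { replace (v1 * v2 * (d1 * d1 + d2 * d2)) with
      ((v1 * v1 + v2 * v2) * (d1 * d2) + (v2 * d1 - v1 * d2) * (v1 * d1 - v2 * d2)) by ring.
    replace (v2 * d1 - v1 * d2) with 0 by lra; ring. }
  assert (0 <= (v1 * v1 + v2 * v2) * (d1 * d2)) by (apply Rmult_le_pos; nra).
  nra.
Qed.

Lemma full_face_span_not_line w q K F v :
  (forall x, F x <-> Lset w q K x) -> 0 < K -> Lset w q K q -> v <> (0, 0) ->
  ~ (forall x, span_face F x <-> exists c, x = (c * fst v, c * snd v)).
Proof.
  intros HF HK Hq Hv Hline; destruct q as [q0 q1].
  assert (Hspan : forall u u', Lset w (q0, q1) K u -> Lset w (q0, q1) K u' ->
            span_face F (fst u - fst u', snd u - snd u')).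
  { intros u u' Hu Hu'; exists ((1, u, u') :: nil); split.
    - intros c x x' [E|[]]; inversion E; subst; split; now apply HF.
    - simpl; f_equal; ring. }
  apply Lset_iff in Hq; simpl in Hq.
  destruct (proj1 (Hline _) (Hspan (q0, q1) (q0 - K, q1) ltac:(apply Lset_iff; simpl; intuition lra)
                                                        ltac:(apply Lset_iff; simpl; intuition lra)))
    as [c1 E1].
  destruct (proj1 (Hline _) (Hspan (q0, q1 + K) (q0, q1) ltac:(apply Lset_iff; simpl; intuition lra)
                                                        ltac:(apply Lset_iff; simpl; intuition lra)))
    as [c2 E2].
  simpl in E1, E2; injection E1 as E11 E12; injection E2 as E21 E22.
  destruct v as [v1 v2]; simpl in *.
  assert (Hc1 : c1 <> 0) by (intro; subst; lra).
  assert (Hc2 : c2 <> 0) by (intro; subst; lra).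
  assert (Hv2 : c1 * v2 = 0) by lra; assert (Hv1 : c2 * v1 = 0) by lra.
  apply Rmult_integral in Hv1, Hv2.
  destruct Hv1 as [Hz | ->]; [contradiction|]; destruct Hv2 as [Hz | ->]; [contradiction|].
  now apply Hv.
Qed.

(** Every face of [L] spanning a line has a direction [v] with [v0 v1 >= 0]:
    faces of [L] are horizontal, vertical or diagonal edges. *)
Lemma face_line_direction w q K F v :
  is_face (Lset w q K) F -> v <> (0, 0) ->
  (forall x, span_face F x <-> exists c, x = (c * fst v, c * snd v)) ->
  0 < K -> Lset w q K q -> fst v * snd v >= 0.
Proof.
  intros [HF|[a [b [Ha [Hsupp HF]]]]] Hv Hline HK Hq.
  - exfalso; exact (full_face_span_not_line w q K F v HF HK Hq Hv Hline).
  - assert (Hsv : span_face F v) by (apply Hline; exists 1; destruct v; simpl; f_equal; ring).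
    destruct (span_face_distinct_points F v Hsv Hv) as [u [u' [Fu [Fu' Hne]]]].
    destruct (proj1 (HF u) Fu) as [Hu Eu]; destruct (proj1 (HF u') Fu') as [Hu' Eu'].
    set (d := (fst u - fst u', snd u - snd u')).
    assert (Hd : d <> (0, 0)).
    { intro Hz; apply Hne; injection Hz as Hz1 Hz2; destruct u, u'; simpl in *; f_equal; lra. }
    assert (Hdd : dot a d = 0) by (revert Eu Eu'; unfold d, dot; simpl; lra).
    assert (Hsign : fst d * snd d >= 0).
    { unfold d; simpl; apply Rnot_lt_ge; intro Hanti.
      destruct (Rlt_or_le (fst u') (fst u)) as [Hlt|Hle].
      - apply (supporting_line_no_anti_pair w q K a b u u'); auto; nra.
      - destruct (Req_dec (fst u') (fst u)) as [Heq|Hneq]; [rewrite Heq in Hanti; nra|].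
        apply (supporting_line_no_anti_pair w q K a b u' u); auto; nra. }
    apply (parallel_sign a v d); auto.
    apply (span_face_perp F a b); auto; intros x Fx; now apply HF.
Qed.

Lemma det_proj_line_pos (A : mat2) (v : pt) :
  fst (fst A) > 0 -> snd (snd A) > 0 -> snd (fst A) >= 0 -> fst (snd A) >= 0 ->
  v <> (0, 0) -> fst v * snd v >= 0 -> det_proj_line v A > 0.
Proof.
  intros Ha Hd Hb Hc Hv Hsign; pose proof (sumsq_pos v Hv) as Nv.
  destruct A as [[a b] [c d]], v as [v1 v2]; unfold det_proj_line, mv, dot; simpl in *.
  apply Rdiv_lt_0_compat; [|lra].
  assert (Hdiag : a * (v1 * v1) + d * (v2 * v2) > 0).
  { destruct (Req_dec v1 0) as [->|H1]; [nra|].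
    assert (v1 * v1 > 0) by nra; nra. }
  assert ((b + c) * (v1 * v2) >= 0) by nra.
  nra.
Qed.

Lemma conclusion_of_sign_pattern w q K (J : pt -> mat2) Pif :
  (forall y, Lset w q K y -> det2 (J y) > 0 /\ fst (fst (J y)) > 0 /\ snd (snd (J y)) > 0
      /\ snd (fst (J y)) >= 0 /\ fst (snd (J y)) >= 0) ->
  (forall y, Lset w q K y -> Pif y = (0, 0) -> y = q) -> 0 < K -> Lset w q K q ->
  conclusion (Lset w q K) J Pif q.
Proof.
  intros HJ Huniq HK Hq; split; [|exact Huniq].
  intros y F Hy HF Fy; destruct (HJ y Hy) as [Hdet [Ha [Hd [Hb Hc]]]].
  split; [now intros _|].
  intros v Hv Hline; apply det_proj_line_pos; auto.
  exact (face_line_direction w q K F v HF Hv Hline HK Hq).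
Qed.

Definition Gcum (Fc : bool -> bool -> R -> R) (p : bool -> bool -> R) (d z : bool) (t : R) : R :=
  Fc d z t * p d z.

Lemma Pi_zero_Phi Fc p tau y : Pi Fc p tau y = (0, 0) -> forall z, Phi (Gcum Fc p) z y = tau.
Proof.
  unfold Pi, PiZ, Phi, Gcum; intros E z; injection E as E0 E1; destruct z; lra.
Qed.

Theorem mainTheorem5
  (Fc f : bool -> bool -> R -> R) (p : bool -> bool -> R) (tau K : R)
  (q : pt) (withH : bool)
  (Hp01 : forall d z, 0 <= p d z <= 1)
  (Hpsum : forall z, p false z + p true z = 1)
  (HF01 : forall d z t, 0 <= Fc d z t <= 1)
  (HFmono : forall d z s t, s <= t -> Fc d z s <= Fc d z t)
  (Hdens : forall d z t, derivable_pt_lim (Fc d z) t (f d z t))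
  (Hcont : forall y, Lset withH q K y -> forall z,
       continuity_pt (f false z) (fst y) /\ continuity_pt (f true z) (snd y))
  (HK : 0 < K)
  (HqL : Lset withH q K q)
  (Hq : Pi Fc p tau q = (0, 0)) :
  ((forall y, Lset withH q K y ->
      fyd f p true true (snd y) * fyd f p false false (fst y) >
      fyd f p true false (snd y) * fyd f p false true (fst y) /\
      fyd f p true true (snd y) > 0 /\ fyd f p false false (fst y) > 0) ->
   conclusion (Lset withH q K) (dPi f p) (Pi Fc p tau) q) /\
  ((forall y, Lset withH q K y ->
      fyd f p true true (snd y) * fyd f p false false (fst y) <
      fyd f p true false (snd y) * fyd f p false true (fst y) /\
      fyd f p true false (snd y) > 0 /\ fyd f p false true (fst y) > 0) ->
   conclusion (Lset withH q K) (fun y => swap_rows (dPi f p y)) (Pi Fc p tau) q).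
Proof.
  set (G := Gcum Fc p).
  assert (G_deriv : forall d z t, derivable_pt_lim (G d z) t (fyd f p d z t))
    by (intros d z t; apply derivable_pt_lim_scal_r, Hdens).
  assert (G_mono : forall d z s t, s <= t -> G d z s <= G d z t)
    by (intros d z s t Hst; apply Rmult_le_compat_r; [apply Hp01|now apply HFmono]).
  assert (fyd_nonneg : forall d z t, fyd f p d z t >= 0)
    by (intros d z t; apply Rle_ge, (monotone_deriv_nonneg (G d z) t); auto).
  assert (Hzero_q := Pi_zero_Phi Fc p tau q Hq).
  split; intro HL; apply conclusion_of_sign_pattern; auto.
  - intros y Hy; destruct (HL y Hy) as (Hlmr & H11 & H00); unfold dPi, det2; simpl.
    repeat split; try lra; apply fyd_nonneg.
  - intros y Hy Hpi; pose proof (Pi_zero_Phi Fc p tau y Hpi) as Hzero_y.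
    apply (Phi_injective withH q K G (fyd f p)); auto.
    + intros u Hu; apply (HL u Hu).
    + intros u Hu; apply (HL u Hu).
    + exact (eq_trans (Hzero_y false) (eq_sym (Hzero_q false))).
    + exact (eq_trans (Hzero_y true) (eq_sym (Hzero_q true))).
  - intros y Hy; destruct (HL y Hy) as (Hlmr & H10 & H01); unfold swap_rows, dPi, det2; simpl.
    repeat split; try lra; apply fyd_nonneg.
  - (* the rows [z = 0] and [z = 1] exchange roles *)
    intros y Hy Hpi; pose proof (Pi_zero_Phi Fc p tau y Hpi) as Hzero_y.
    apply (Phi_injective withH q K (fun d z => G d (negb z)) (fun d z => fyd f p d (negb z)));
      simpl; auto.
    + intros u Hu; destruct (HL u Hu); lra.
    + intros u Hu; apply (HL u Hu).
    + exact (eq_trans (Hzero_y true) (eq_sym (Hzero_q true))).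
    + exact (eq_trans (Hzero_y false) (eq_sym (Hzero_q false))).
Qed.
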